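(* Let $n\ge1$ and let $A_1,\ldots,A_n$ be operators on $\mathbb{C}^{2^n}$ such that $A_x^\dagger=A_x$ and $A_xA_y+A_yA_x=2\delta_{xy}\mathbb{1}$ for all $x,y$. Consider the dichotomic steering functional $F^{dicho}=\{A_x: x=1,\ldots,n\}$, acting on an $(n,2,2^n)$-assemblage $\sigma$ by $\langle F^{dicho},\sigma\rangle=\mathrm{Tr}\big(\sum_{x=1}^n A_x(\sigma_x^1-\sigma_x^2)\big)$. Then $$V(F^{dicho})=\frac{\sup\{|\langle F^{dicho},\sigma\rangle|:\sigma\in\mathcal{Q}\}}{\sup\{|\langle F^{dicho},\sigma\rangle|:\sigma\in\mathcal{L}\}}\ \ge\ \sqrt{\tfrac{n}{2}}.$$
   Context: Here $d=2^n$. An $(n,2,d)$-assemblage is a family $\sigma=\{\sigma_x^a: x=1,\ldots,n,\ a=1,2\}$ of positive semidefinite operators on $\mathbb{C}^d$ such that $\sigma_x^1+\sigma_x^2$ does not depend on $x$ and has trace $1$; $\mathcal{Q}$ is the set of all such assemblages. An assemblage has a local hidden state (LHS) model if there exist a finite index set $\Lambda$, weights $q_\lambda\ge0$ with $\sum_\lambda q_\lambda=1$, density matrices $\sigma_\lambda$ on $\mathbb{C}^d$, and probability distributions $\{p_\lambda(a|x)\}_{a=1,2}$ for each $x,\lambda$, such that $\sigma_x^a=\sum_\lambda q_\lambda p_\lambda(a|x)\sigma_\lambda$ for all $x,a$; $\mathcal{L}$ is the set of such assemblages. *)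

From HB Require Import structures.
From mathcomp Require Import all_boot all_order all_algebra.
From mathcomp Require Import complex.
From mathcomp Require Import boolp classical_sets reals.
Set Implicit Arguments. Unset Strict Implicit. Unset Printing Implicit Defensive.
Import Order.TTheory GRing.Theory Num.Theory.
Local Open Scope ring_scope.

Section Steering.
Variable R : realType.
Local Notation C := R[i].

Definition adjmx (d : nat) (A : 'M[C]_d) : 'M[C]_d :=
  map_mx (fun z : C => z^*) A^T.

Definition herm_mx (d : nat) (A : 'M[C]_d) : Prop := adjmx A = A.

(* positive semidefinite: Hermitian and v^dagger A v >= 0 for all v
   (for complex numbers, 0 <= z means z is real and nonnegative) *)
Definition psd (d : nat) (A : 'M[C]_d) : Prop :=
  herm_mx A /\
  forall v : 'cV[C]_d, 0 <= ((map_mx (fun z : C => z^*) v^T) *m A *m v) 0 0.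

Definition density (d : nat) (A : 'M[C]_d) : Prop := psd A /\ \tr A = 1.

(* An (n,2,d)-assemblage sigma x a, with x : 'I_n (x = 1..n) and
   a : 'I_2 (index 0 is outcome a=1, index 1 is outcome a=2). *)
Definition assemblage (n d : nat) (sigma : 'I_n -> 'I_2 -> 'M[C]_d) : Prop :=
  (forall x a, psd (sigma x a)) /\
  exists rho : 'M[C]_d, (forall x, sigma x 0 + sigma x 1 = rho) /\ \tr rho = 1.

Definition has_LHS (n d : nat) (sigma : 'I_n -> 'I_2 -> 'M[C]_d) : Prop :=
  exists (m : nat) (q : 'I_m -> R) (rho : 'I_m -> 'M[C]_d)
         (p : 'I_m -> 'I_n -> 'I_2 -> R),
    (forall l, 0 <= q l) /\ \sum_(l < m) q l = 1 /\
    (forall l, density (rho l)) /\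
    (forall l x a, 0 <= p l x a) /\ (forall l x, \sum_(a < 2) p l x a = 1) /\
    (forall x a, sigma x a = \sum_(l < m) ((q l * p l x a)%:C)%C *: rho l).

Definition LHS_assemblage (n d : nat) (sigma : 'I_n -> 'I_2 -> 'M[C]_d) : Prop :=
  assemblage sigma /\ has_LHS sigma.

Definition dicho_pairing (n d : nat) (A : 'I_n -> 'M[C]_d)
  (sigma : 'I_n -> 'I_2 -> 'M[C]_d) : C :=
  \tr (\sum_(x < n) A x *m (sigma x 0 - sigma x 1)).

Definition quantum_value (n d : nat) (A : 'I_n -> 'M[C]_d) : R :=
  sup [set r : R | exists sigma, assemblage sigma /\ r = @complex.Re R `|dicho_pairing A sigma|].

Definition local_value (n d : nat) (A : 'I_n -> 'M[C]_d) : R :=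
  sup [set r : R | exists sigma, LHS_assemblage sigma /\ r = @complex.Re R `|dicho_pairing A sigma|].

Definition violation (n d : nat) (A : 'I_n -> 'M[C]_d) : R :=
  quantum_value A / local_value A.

End Steering.

(* The quantum value is at least n: the assemblage sigma_x^a = (1 +- A_x) / 2d,
   made of the spectral projections of the involutions A_x, has pairing n.
   In an LHS model each hidden state rho contributes Tr (B rho) with
   B = sum_x c_x A_x and c_x = p(1|x) - p(2|x) in [-1, 1]; anticommutation gives
   B^2 = (sum_x c_x^2) 1 <= n, so |Tr (B rho)| <= sqrt n by the operator
   inequality 2 t B <= B^2 + t^2.  Since some LHS model reaches value 1, the
   local value lies in [1, sqrt n] and the violation is at least
   n / sqrt n = sqrt n >= sqrt (n / 2). *)

From HB Require Import structures.
From mathcomp Require Import all_boot all_order all_algebra.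
From mathcomp Require Import lra.
From mathcomp Require Import complex.
From mathcomp Require Import boolp classical_sets reals.
Import Order.TTheory GRing.Theory Num.Theory.
Local Open Scope ring_scope.
Set Implicit Arguments. Unset Strict Implicit. Unset Printing Implicit Defensive.

Section Adjoint.
Variables (R : realType) (d : nat).
Local Notation C := R[i].
Local Notation conjmx := (map_mx (fun z : C => z^*)).
Implicit Types (M S X Y : 'M[C]_d) (a : C).

Lemma adjmxE M i j : adjmx M i j = (M j i)^*.
Proof. by rewrite !mxE. Qed.

Lemma adjmxK : involutive (@adjmx R d).
Proof. by move=> M; apply/matrixP=> i j; rewrite !adjmxE conjCK. Qed.

Lemma adjmxD X Y : adjmx (X + Y) = adjmx X + adjmx Y.
Proof. by apply/matrixP=> i j; rewrite !mxE rmorphD. Qed.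

Lemma adjmxN X : adjmx (- X) = - adjmx X.
Proof. by apply/matrixP=> i j; rewrite !mxE rmorphN. Qed.

Lemma adjmxZ a X : adjmx (a *: X) = a^* *: adjmx X.
Proof. by apply/matrixP=> i j; rewrite !mxE rmorphM. Qed.

Lemma adjmxM X Y : adjmx (X *m Y) = adjmx Y *m adjmx X.
Proof.
apply/matrixP=> i j; rewrite adjmxE !mxE rmorph_sum; apply: eq_bigr => k _.
by rewrite !adjmxE rmorphM mulrC.
Qed.

Lemma adjmx_scalar a : adjmx (a%:M : 'M[C]_d) = a^*%:M.
Proof.
apply/matrixP=> i j; rewrite adjmxE !mxE eq_sym.
by case: (i == j); rewrite ?mulr1n ?mulr0n ?conjC0.
Qed.

Lemma herm_mx0 : herm_mx (0 : 'M[C]_d).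
Proof. by apply/matrixP=> i j; rewrite !mxE conjC0. Qed.

Lemma herm_mxD X Y : herm_mx X -> herm_mx Y -> herm_mx (X + Y).
Proof. by rewrite /herm_mx adjmxD => -> ->. Qed.

Lemma herm_mxZ a X : a \is Num.real -> herm_mx X -> herm_mx (a *: X).
Proof. by rewrite /herm_mx adjmxZ => /conj_Creal -> ->. Qed.

Lemma herm_mxN X : herm_mx X -> herm_mx (- X).
Proof. by rewrite /herm_mx adjmxN => ->. Qed.

Lemma psd_mxtrace_adjmx_mul_ge0 M S : psd S -> 0 <= \tr (adjmx M *m M *m S).
Proof.
move=> [_ psdS]; rewrite -mulmxA mxtrace_mulC; apply: sumr_ge0 => i _.
have := psdS (conjmx (row i M))^T; congr (_ <= _).
rewrite !mxE; apply: eq_bigr => j _; rewrite adjmxE !mxE; congr (_ * _).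
by apply: eq_bigr => k _; rewrite !mxE conjCK.
Qed.

Lemma psd_mxtrace_ge0 S : psd S -> 0 <= \tr S.
Proof.
by move=> /(psd_mxtrace_adjmx_mul_ge0 1%:M); rewrite adjmx_scalar conjC1 !mul1mx.
Qed.

Lemma psd_adjmx_mul M : psd (adjmx M *m M).
Proof.
split=> [|v]; first by rewrite /herm_mx adjmxM adjmxK.
have -> : conjmx v^T *m (adjmx M *m M) *m v = conjmx (M *m v)^T *m (M *m v).
  rewrite !mulmxA; congr (_ *m _ *m _); apply/matrixP=> i j.
  rewrite !mxE rmorph_sum; apply: eq_bigr => k _.
  by rewrite !mxE rmorphM mulrC.
by rewrite mxE; apply: sumr_ge0 => j _; rewrite !mxE mulrC mul_conjC_ge0.
Qed.

Lemma psdZ (r : C) S : 0 <= r -> psd S -> psd (r *: S).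
Proof.
move=> r_ge0 [hermS psdS]; split=> [|v].
  by apply: herm_mxZ; rewrite ?ger0_real.
by rewrite -scalemxAr -scalemxAl mxE mulr_ge0.
Qed.

End Adjoint.

Section TraceBound.
Variables (R : realType) (d : nat).
Local Notation C := R[i].
Implicit Types (B S : 'M[C]_d).

Lemma realC_real (r : R) : r%:C%C \is Num.real.
Proof. by apply/complex_realP; exists r. Qed.

Lemma mxtrace_herm_mul_psd_le B S (c : C) (t : R) :
  herm_mx B -> B *m B = c%:M -> psd S -> 0 < t -> c <= t%:C%C ^+ 2 ->
  \tr (B *m S) <= t%:C%C * \tr S.
Proof.
move=> hermB sqrB psdS t_gt0 c_le.
set u := t%:C%C.
have u_gt0 : 0 < u by rewrite ltcR.
(* 0 <= Tr ((B - t)^* (B - t) S) = (c + t^2) Tr S - 2 t Tr (B S). *)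
have sqr_shift : adjmx (B - u%:M) *m (B - u%:M) = (c + u ^+ 2)%:M - (2 * u) *: B.
  rewrite adjmxD adjmxN adjmx_scalar hermB conj_Creal ?realC_real //.
  rewrite mulmxBl !mulmxBr sqrB mul_mx_scalar mul_scalar_mx -scalar_mxM -expr2.
  rewrite raddfD /= mulr2n mulrDl mul1r scalerDl.
  by rewrite opprK raddfD opprD [RHS]addrACA [- _ + _]addrC.
have := psd_mxtrace_adjmx_mul_ge0 (B - u%:M) psdS.
rewrite sqr_shift mulmxBl mul_scalar_mx -scalemxAl raddfB /= !mxtraceZ subr_ge0.
have trS_ge0 := psd_mxtrace_ge0 psdS.
have le_sqr : (c + u ^+ 2) * \tr S <= (2 * u) * (u * \tr S).
  by rewrite mulrA -(mulrA 2) -expr2 ler_wpM2r // mulr2n mulrDl mul1r lerD2r.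
by move=> /le_trans /(_ le_sqr); rewrite ler_pM2l // mulr_gt0.
Qed.

Lemma mxtrace_herm_mul_psd_bounds B S (c : C) (t : R) :
  herm_mx B -> B *m B = c%:M -> psd S -> 0 < t -> c <= t%:C%C ^+ 2 ->
  - (t%:C%C * \tr S) <= \tr (B *m S) <= t%:C%C * \tr S.
Proof.
move=> hermB sqrB psdS t_gt0 c_le.
rewrite lerNl -raddfN /= -mulNmx !(mxtrace_herm_mul_psd_le (c := c)) //.
  exact: herm_mxN.
by rewrite mulNmx mulmxN opprK.
Qed.

Lemma mxtrace_involution_mul_psd_sub_bounds B S0 S1 :
  herm_mx B -> B *m B = 1%:M -> psd S0 -> psd S1 ->
  - (\tr S0 + \tr S1) <= \tr (B *m (S0 - S1)) <= \tr S0 + \tr S1.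
Proof.
move=> hermB sqrB psdS0 psdS1.
have bounds S : psd S -> - \tr S <= \tr (B *m S) <= \tr S.
  move=> psdS; have := mxtrace_herm_mul_psd_bounds hermB sqrB psdS (@ltr01 R).
  by rewrite rmorph1 expr1n mul1r; apply.
have /andP[lo0 hi0] := bounds _ psdS0; have /andP[lo1 hi1] := bounds _ psdS1.
rewrite mulmxBr raddfB /= opprD; apply/andP; split.
  by rewrite lerD // lerN2.
by rewrite lerD // lerNl.
Qed.
End TraceBound.

Section SignProjection.
Variables (R : realType) (d : nat).
Local Notation C := R[i].
Variable X : 'M[C]_d.
Hypothesis hermX : herm_mx X.
Hypothesis sqrX : X *m X = 1%:M.

Definition sign_proj (b : bool) : 'M[C]_d := (2^-1 : C) *: (1%:M + (-1) ^+ b *: X).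

Lemma halve_double_mx (Y : 'M[C]_d) : (2^-1 : C) *: (Y + Y) = Y.
Proof. by rewrite scalerDr -scalerDl -{1 2}(mul1r 2^-1) -splitr scale1r. Qed.

Lemma sign_proj_add : sign_proj false + sign_proj true = 1%:M.
Proof.
by rewrite -scalerDr expr0 expr1 scaleN1r scale1r addrACA subrr addr0 halve_double_mx.
Qed.

Lemma sign_proj_sub : sign_proj false - sign_proj true = X.
Proof.
rewrite -scalerBr expr0 expr1 scaleN1r scale1r opprD opprK addrACA subrr add0r.
exact: halve_double_mx.
Qed.

Lemma mul_sign_proj b : X *m sign_proj b = (-1) ^+ b *: sign_proj b.
Proof.
rewrite -scalemxAr mulmxDr mulmx1 -scalemxAr sqrX /sign_proj [RHS]scalerA mulrC -scalerA.
by congr (_ *: _); rewrite scalerDr scalerA -expr2 sqrr_sign scale1r addrC.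
Qed.

Lemma sign_proj_psd b : psd (sign_proj b).
Proof.
have herm_proj : herm_mx (sign_proj b).
  rewrite /herm_mx /sign_proj adjmxZ adjmxD adjmxZ adjmx_scalar hermX.
  by rewrite rmorph_sign conjC1 conj_Creal // ger0_real // invr_ge0 ler0n.
have idem_proj : sign_proj b *m sign_proj b = sign_proj b.
  rewrite {1}/sign_proj -scalemxAl mulmxDl mul1mx -scalemxAl mul_sign_proj.
  by rewrite scalerA -expr2 sqrr_sign scale1r halve_double_mx.
by have := psd_adjmx_mul (sign_proj b); rewrite herm_proj idem_proj.
Qed.

End SignProjection.

Lemma Re_normC_le (R : realType) (z : R[i]) (b : R) :
  - b%:C%C <= z <= b%:C%C -> complex.Re `|z| <= b.
Proof.
move=> /andP[lo hi].
have z_real : z \is Num.real.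
  by rewrite -[z](subrK (- b%:C%C)) rpredD ?lerB_real ?rpredN ?realC_real.
have : `|z| <= b%:C%C by rewrite real_ler_norml // lo hi.
by rewrite lecE => /andP[].
Qed.

Section Involutions.
Variables (R : realType) (n d : nat) (A : 'I_n -> 'M[R[i]]_d).
Local Notation C := R[i].
Hypothesis hermA : forall x, herm_mx (A x).
Hypothesis sqrA : forall x, A x *m A x = 1%:M.

Lemma Re_abs_dicho_pairing_assemblage_le sigma :
  assemblage sigma -> complex.Re `|dicho_pairing A sigma| <= n%:R.
Proof.
move=> [psd_sigma [rho [sum_rho tr_rho]]].
have tr_sum x : \tr (sigma x 0) + \tr (sigma x 1) = 1.
  by rewrite -raddfD /= sum_rho; exact: tr_rho.
apply: Re_normC_le; rewrite rmorph_nat -[n in n%:R]card_ord -sumr_const -sumrN.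
have bounds x := mxtrace_involution_mul_psd_sub_bounds
  (hermA x) (sqrA x) (psd_sigma x 0) (psd_sigma x 1).
rewrite /dicho_pairing raddf_sum /=; apply/andP; split; apply: ler_sum => x _;
  by have /andP[] := bounds x; rewrite tr_sum.
Qed.

Definition sign_proj_assemblage (x : 'I_n) (a : 'I_2) : 'M[C]_d :=
  (d%:R^-1 : C) *: sign_proj (A x) (a != 0).

Hypothesis d_gt0 : (0 < d)%N.

Lemma sign_proj_assemblageP : assemblage sign_proj_assemblage.
Proof.
split=> [x a|].
  by apply: psdZ; [rewrite invr_ge0 ler0n | exact: sign_proj_psd].
exists (d%:R^-1 *: 1%:M); split=> [x|].
  by rewrite -scalerDr sign_proj_add.
(* The trace in [assemblage] is elaborated at the N-module instance of C,
   which [rewrite mxtraceZ] does not match. *)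
by apply: (etrans (mxtraceZ _ _)); rewrite mxtrace1 mulVf // pnatr_eq0 -lt0n.
Qed.

Lemma dicho_pairing_sign_proj_assemblage :
  dicho_pairing A sign_proj_assemblage = n%:R.
Proof.
rewrite /dicho_pairing raddf_sum /= -[n in n%:R]card_ord -sumr_const.
apply: eq_bigr => x _; rewrite -scalerBr sign_proj_sub -scalemxAr sqrA.
by rewrite mxtraceZ mxtrace1 mulVf // pnatr_eq0 -lt0n.
Qed.

End Involutions.

Lemma big_ord2 (V : nmodType) (f : 'I_2 -> V) : \sum_(a < 2) f a = f 0 + f 1.
Proof. by rewrite big_ord_recr big_ord1; by congr (f _ + f _); apply: val_inj. Qed.

Section Clifford.
Variables (R : realType) (n d : nat) (A : 'I_n -> 'M[R[i]]_d).
Local Notation C := R[i].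

Lemma dicho_pairing_hidden_states m (q : 'I_m -> R) (rho : 'I_m -> 'M[C]_d)
    (p : 'I_m -> 'I_n -> 'I_2 -> R) sigma :
  (forall x a, sigma x a = \sum_l ((q l * p l x a)%:C)%C *: rho l) ->
  dicho_pairing A sigma =
    \sum_l (q l)%:C%C * \tr ((\sum_x (p l x 0 - p l x 1)%:C%C *: A x) *m rho l).
Proof.
move=> sigmaE; rewrite /dicho_pairing raddf_sum /=.
under eq_bigr => x _ do
  rewrite !sigmaE -sumrB mulmx_sumr raddf_sum /=.
rewrite exchange_big /=; apply: eq_bigr => l _.
rewrite mulmx_suml raddf_sum mulr_sumr /=; apply: eq_bigr => x _.
by rewrite -scalerBl -scalemxAr -scalemxAl !mxtraceZ -rmorphB -mulrBr rmorphM mulrA.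
Qed.

Hypothesis hermA : forall x, herm_mx (A x).
Hypothesis anticommA :
  forall x y, A x *m A y + A y *m A x = (if x == y then 2 else 0)%:M.

Lemma clifford_sqr x : A x *m A x = 1%:M.
Proof.
rewrite -(halve_double_mx (A x *m A x)) anticommA eqxx scale_scalar_mx.
by rewrite mulVf // pnatr_eq0.
Qed.

Lemma clifford_comb_sqr (c : 'I_n -> C) :
  (\sum_x c x *: A x) *m (\sum_x c x *: A x) = (\sum_x c x ^+ 2)%:M.
Proof.
set S := _ *m _.
have S_expand : S = \sum_x \sum_y (c x * c y) *: (A x *m A y).
  rewrite /S mulmx_suml; apply: eq_bigr => x _; rewrite mulmx_sumr.
  by apply: eq_bigr => y _; rewrite -scalemxAl -scalemxAr scalerA.
have S_double : S + S = \sum_x (c x ^+ 2 * 2)%:M.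
  rewrite {1}S_expand exchange_big S_expand -big_split /=; apply: eq_bigr => x _.
  rewrite -big_split /= (bigD1 x) //= big1 => [|y /negPf y_neq_x]; last first.
    rewrite mulrC -scalerDr addrC anticommA eq_sym y_neq_x.
    by rewrite scale_scalar_mx mulr0 raddf0.
  by rewrite -scalerDr anticommA eqxx addr0 scale_scalar_mx expr2.
rewrite -(halve_double_mx S) S_double -(raddf_sum (@scalar_mx C d)) scale_scalar_mx.
by rewrite -mulr_suml mulrCA mulVf ?mulr1 // pnatr_eq0.
Qed.

Lemma herm_real_comb (r : 'I_n -> R) : herm_mx (\sum_x (r x)%:C%C *: A x).
Proof.
apply: big_ind => [|X Y|x _]; [exact: herm_mx0 | exact: herm_mxD |].
exact: herm_mxZ (realC_real _) (hermA x).
Qed.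

Lemma Re_abs_dicho_pairing_LHS_le sigma :
  (0 < n)%N -> has_LHS sigma -> complex.Re `|dicho_pairing A sigma| <= Num.sqrt n%:R.
Proof.
move=> n_gt0 [m [q [rho [p [q_ge0 [q_sum [rho_density [p_ge0 [p_sum sigmaE]]]]]]]]].
set t := Num.sqrt (n%:R : R).
have t_gt0 : 0 < t by rewrite sqrtr_gt0 ltr0n.
have state_bounds l :
    - t%:C%C <= \tr ((\sum_x (p l x 0 - p l x 1)%:C%C *: A x) *m rho l) <= t%:C%C.
  have [psd_rho tr_rho] := rho_density l.
  pose r x := p l x 0 - p l x 1.
  have := mxtrace_herm_mul_psd_bounds (herm_real_comb r)
    (clifford_comb_sqr (fun x => (r x)%:C%C)) psd_rho t_gt0.
  have -> : \tr (rho l) = 1 by exact: tr_rho.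
  rewrite mulr1; apply.
  rewrite -rmorphXn sqr_sqrtr ?ler0n // rmorph_nat -[n in n%:R]card_ord -sumr_const.
  apply: ler_sum => x _; rewrite -rmorphXn -(rmorph1 (real_complex R)) lecR /r.
  have := p_sum l x; rewrite big_ord2; have := p_ge0 l x 0; have := p_ge0 l x 1; nra.
apply: Re_normC_le; rewrite (dicho_pairing_hidden_states sigmaE).
have qC_ge0 l : 0 <= (q l)%:C%C :> C by rewrite ler0c.
have qC_sum : \sum_l (q l)%:C%C = 1 :> C by rewrite -rmorph_sum q_sum rmorph1.
rewrite -[X in - X <= _]mul1r -[X in _ <= _ <= X]mul1r -qC_sum !mulr_suml -sumrN.
by apply/andP; split; apply: ler_sum => l _; rewrite -?mulrN ler_wpM2l //;
  case/andP: (state_bounds l).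
Qed.

End Clifford.

Section LocalWitness.
Variables (R : realType) (n d : nat).
Local Notation C := R[i].

Lemma density_normalize (P : 'M[C]_d) : psd P -> 0 < \tr P -> density ((\tr P)^-1 *: P).
Proof.
move=> psdP trP_gt0; split; first by apply: psdZ; rewrite // invr_ge0 ltW.
by apply: (etrans (mxtraceZ _ _)); rewrite mulVf // gt_eqF.
Qed.

Lemma LHS_assemblage_single_state (rho : 'M[C]_d) (p : 'I_n -> 'I_2 -> R) :
  density rho -> (forall x a, 0 <= p x a) -> (forall x, p x 0 + p x 1 = 1) ->
  LHS_assemblage (fun x a => (p x a)%:C%C *: rho).
Proof.
move=> [psd_rho tr_rho] p_ge0 p_sum; split.
  split=> [x a|]; first by apply: psdZ; rewrite ?ler0c.
  by exists rho; split=> // x; rewrite -scalerDl -rmorphD p_sum rmorph1 scale1r.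
exists 1%N, (fun=> 1), (fun=> rho), (fun=> p); do !split=> //.
- by rewrite big_ord1.
- by move=> _ x; rewrite big_ord2.
- by move=> x a; rewrite big_ord1 mul1r.
Qed.

Lemma exists_sign_proj_mxtrace_gt0 (X : 'M[C]_d) :
  (0 < d)%N -> herm_mx X -> X *m X = 1%:M -> exists b, 0 < \tr (sign_proj X b).
Proof.
move=> d_gt0 hermX sqrX.
have tr_sum : \tr (sign_proj X false) + \tr (sign_proj X true) = d%:R.
  by rewrite -raddfD /= sign_proj_add mxtrace1.
have [tr0|tr_neq0] := eqVneq (\tr (sign_proj X false)) 0.
  by exists true; move: tr_sum; rewrite tr0 add0r => ->; rewrite ltr0n.
by exists false; rewrite lt_def tr_neq0 psd_mxtrace_ge0 //; apply: sign_proj_psd.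
Qed.

Variable A : 'I_n -> 'M[C]_d.
Hypothesis hermA : forall x, herm_mx (A x).
Hypothesis sqrA : forall x, A x *m A x = 1%:M.

Lemma exists_LHS_assemblage_Re_abs_dicho_pairing1 (x0 : 'I_n) :
  (0 < d)%N ->
  exists sigma, LHS_assemblage sigma /\ complex.Re `|dicho_pairing A sigma| = 1.
Proof.
move=> d_gt0.
have [b trP_gt0] := exists_sign_proj_mxtrace_gt0 d_gt0 (hermA x0) (sqrA x0).
set P := sign_proj (A x0) b.
pose p x (a : 'I_2) : R := if x == x0 then (a == 0)%:R else 2^-1.
pose sigma x a := (p x a)%:C%C *: ((\tr P)^-1 *: P).
have pairing : dicho_pairing A sigma = (-1) ^+ b.
  rewrite /dicho_pairing raddf_sum /= (bigD1 x0) //= big1 => [|x x_neq_x0]; last first.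
    by rewrite /sigma -scalerBl -rmorphB /p (negPf x_neq_x0) subrr scale0r mulmx0 raddf0.
  rewrite /sigma -scalerBl -rmorphB /p eqxx subr0 rmorph1 scale1r addr0.
  by rewrite -scalemxAr mul_sign_proj // -/P scalerA mxtraceZ mulrAC mulVf ?mul1r ?gt_eqF.
exists sigma; split; last by rewrite pairing normr_sign.
apply: LHS_assemblage_single_state => [|x a|x].
- by apply: density_normalize => //; apply: sign_proj_psd.
- by rewrite /p; case: ifP; rewrite ?ler0n ?invr_ge0.
- by rewrite /p; case: ifP => _; rewrite ?addr0 //; lra.
Qed.

End LocalWitness.

Lemma sup_bounds (R : realType) (E : set R) (a b : R) :
  E a -> ubound E b -> a <= sup E <= b.
Proof.
move=> Ea ubE; apply/andP; split; last by apply: ge_sup => //; exists a.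
by apply: sup_upper_bound => //; split; [exists a | exists b].
Qed.

Section Values.
Variables (R : realType) (n d : nat) (A : 'I_n -> 'M[R[i]]_d).
Hypothesis hermA : forall x, herm_mx (A x).
Hypothesis d_gt0 : (0 < d)%N.

Lemma quantum_value_ge : (forall x, A x *m A x = 1%:M) -> n%:R <= quantum_value A.
Proof.
move=> sqrA; rewrite /quantum_value; set E := (X in sup X).
have E_n : E n%:R.
  exists (sign_proj_assemblage A); split; first exact: sign_proj_assemblageP.
  rewrite dicho_pairing_sign_proj_assemblage // normr_nat.
  by rewrite -(rmorph_nat (real_complex R)).
have E_le_n : ubound E n%:R.
  by move=> r [sigma [sigmaQ ->]]; apply: Re_abs_dicho_pairing_assemblage_le.
by case/andP: (sup_bounds E_n E_le_n).
Qed.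

Lemma local_value_bounds :
  (0 < n)%N -> (forall x y, A x *m A y + A y *m A x = (if x == y then 2 else 0)%:M) ->
  1 <= local_value A <= Num.sqrt n%:R.
Proof.
move=> n_gt0 anticommA.
have [sigma [sigmaL pairing1]] := exists_LHS_assemblage_Re_abs_dicho_pairing1 hermA
  (clifford_sqr anticommA) (Ordinal n_gt0) d_gt0.
apply: sup_bounds; first by exists sigma; rewrite pairing1.
by move=> r [sigma' [[_ sigma'L] ->]]; apply: Re_abs_dicho_pairing_LHS_le.
Qed.

End Values.

Theorem corollary1 (R : realType) (n : nat) (hn : (1 <= n)%N)
  (A : 'I_n -> 'M[R[i]]_(2 ^ n))
  (hA : forall x, herm_mx (A x))
  (hAC : forall x y, A x *m A y + A y *m A x = (if x == y then 2 else 0)%:M) :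
  Num.sqrt (n%:R / 2 : R) <= violation A.
Proof.
have d_gt0 : (0 < 2 ^ n)%N by rewrite expn_gt0.
have q_ge := quantum_value_ge hA d_gt0 (clifford_sqr hAC).
have /andP[l_ge1 l_le] := local_value_bounds hA d_gt0 hn hAC.
have l_gt0 : 0 < local_value A by rewrite (lt_le_trans ltr01).
apply: (@le_trans _ _ (Num.sqrt n%:R)).
  by rewrite ler_wsqrtr // ler_pdivrMr // ler_peMr // ler1n.
rewrite ler_pdivlMr // (le_trans _ q_ge) // -[leRHS](sqr_sqrtr (ler0n _ n)) expr2.
by rewrite ler_wpM2l ?sqrtr_ge0.
Qed.
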